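(* Let $C$ be a nontrivial group and let $A_1,B_1,A_2,B_2$ be $C$-groups with $A_1\cap B_1=A_2\cap B_2=C$ (the designated copy of $C$). If $\mathcal{F}_{\mathcal{L}_C}(A_1)\equiv\mathcal{F}_{\mathcal{L}_C}(A_2)$ and $\mathcal{F}_{\mathcal{L}_C}(B_1)\equiv\mathcal{F}_{\mathcal{L}_C}(B_2)$, then the amalgamated free products $A_1*_CB_1$ and $A_2*_CB_2$ are existentially equivalent in the language $\mathcal{L}_C$, and hence also in the language of groups.
   Context: The language $\mathcal{L}_C$ of $C$-groups has a constant symbol $d_c$ for each $c\in C$, a binary function $\cdot$, a unary function $^{-1}$ and a unary predicate $\delta$. A $C$-group is a group $H$ in this language satisfying all closed atomic formulas and negations of closed atomic formulas true in $C$ (so $c\mapsto d_c$ embeds $C$ as a subgroup, the designated copy of $C$), together with the axioms $d_c\in\delta$ and $\forall x(x\notin\delta\rightarrow x\neq d_c)$ for all $c\in C$. For $\mathcal{L}_C$-structures, an $\mathcal{L}_C$-isomorphism between subsets $S,T$ is a bijection $\phi:S\to T$ such that $\phi$ and $\phi^{-1}$ fix constants lying in the set, preserve $\delta$, and satisfy $\phi(f(s_1,\dots,s_n))=f(\phi(s_1),\dots,\phi(s_n))$ whenever the $s_i$ and $f(s_1,\dots,s_n)$ lie in $S$ (symmetrically for $\phi^{-1}$). $\mathcal{F}_{\mathcal{L}_C}(X)\equiv\mathcal{F}_{\mathcal{L}_C}(Y)$ means that every finite subset of $X$ is $\mathcal{L}_C$-isomorphic to a finite subset of $Y$ and vice versa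 (i.e. there is a bijection between isomorphism classes of finite subsets matching isomorphic ones). $A_i*_CB_i$ is regarded as a $C$-group via the common copy of $C$. *)

From Stdlib Require Import List.
Import ListNotations.
Set Implicit Arguments.

Record Grp := {
  carrier :> Type;
  gmul : carrier -> carrier -> carrier;
  ginv : carrier -> carrier;
  gone : carrier;
  gmul_assoc : forall x y z, gmul x (gmul y z) = gmul (gmul x y) z;
  gmul_1l : forall x, gmul gone x = x;
  gmul_Vl : forall x, gmul (ginv x) x = gone
}.

Definition is_hom (G H : Grp) (f : G -> H) : Prop :=
  forall x y, f (gmul G x y) = gmul H (f x) (f y).

Definition nontrivial (G : Grp) : Prop := exists x : G, x <> gone G.

(* A C-group: a group H with constants d_c (c in C) such that c |-> d_c embeds C
   as a subgroup (this is exactly "satisfies the closed atomic formulas and their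
   negations true in C"), and a unary predicate delta containing all d_c. *)
Record CGrp (C : Grp) := {
  cg :> Grp;
  dc : C -> cg;
  dc_hom : is_hom C cg dc;
  dc_inj : forall c1 c2, dc c1 = dc c2 -> c1 = c2;
  cdelta : cg -> Prop;
  cdelta_dc : forall c, cdelta (dc c)
}.

Definition lc_iso_lists (C : Grp) (X Y : CGrp C) (s : list X) (t : list Y) : Prop :=
  NoDup s /\ NoDup t /\ length s = length t /\
  forall (i j k : nat) (x0 : X) (y0 : Y),
    i < length s -> j < length s -> k < length s ->
    let si := nth i s x0 in let sj := nth j s x0 in let sk := nth k s x0 in
    let ti := nth i t y0 in let tj := nth j t y0 in let tk := nth k t y0 in
    (forall c : C, dc X c = si <-> dc Y c = ti) /\
    (cdelta X si <-> cdelta Y ti) /\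
    (gmul X si sj = sk <-> gmul Y ti tj = tk) /\
    (ginv X si = sj <-> ginv Y ti = tj).

(* F_{L_C}(X) is "contained in" F_{L_C}(Y): every finite subset of X is
   L_C-isomorphic to a finite subset of Y. *)
Definition fin_embeds (C : Grp) (X Y : CGrp C) : Prop :=
  forall s : list X, NoDup s -> exists t : list Y, lc_iso_lists X Y s t.

Definition F_equiv (C : Grp) (X Y : CGrp C) : Prop :=
  fin_embeds X Y /\ fin_embeds Y X.

(* P, with maps iA : A -> P and iB : B -> P, is the amalgamated free product
   A *_C B (defined by its universal property), regarded as a C-group via the
   common copy of C; delta is interpreted as the union of the images of the
   delta's of A and B. *)
Definition is_amalgam (C : Grp) (A B P : CGrp C) (iA : A -> P) (iB : B -> P) : Prop :=
  is_hom A P iA /\ is_hom B P iB /\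
  (forall c, iA (dc A c) = dc P c) /\ (forall c, iB (dc B c) = dc P c) /\
  (forall x : P, cdelta P x <->
     (exists a, cdelta A a /\ x = iA a) \/ (exists b, cdelta B b /\ x = iB b)) /\
  (forall (G : Grp) (fA : A -> G) (fB : B -> G),
     is_hom A G fA -> is_hom B G fB -> (forall c, fA (dc A c) = fB (dc B c)) ->
     exists h : P -> G, is_hom P G h /\
       (forall a, h (iA a) = fA a) /\ (forall b, h (iB b) = fB b) /\
       (forall h' : P -> G, is_hom P G h' ->
          (forall a, h' (iA a) = fA a) -> (forall b, h' (iB b) = fB b) ->
          forall x, h' x = h x)).

Inductive term (C : Type) :=
| TVar : nat -> term C
| TConst : C -> term C
| TOne : term C                       (* group identity; L_C-definable as d_1 *)
| TMul : term C -> term C -> term C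
| TInv : term C -> term C.

Inductive qf (C : Type) :=
| FEq : term C -> term C -> qf C
| FDelta : term C -> qf C
| FNot : qf C -> qf C
| FAnd : qf C -> qf C -> qf C
| FOr : qf C -> qf C -> qf C.

Fixpoint teval (C : Grp) (M : CGrp C) (v : nat -> M) (t : term C) : M :=
  match t with
  | TVar _ n => v n
  | TConst c => dc M c
  | TOne _ => gone M
  | TMul t1 t2 => gmul M (teval M v t1) (teval M v t2)
  | TInv t1 => ginv M (teval M v t1)
  end.

Fixpoint qeval (C : Grp) (M : CGrp C) (v : nat -> M) (f : qf C) : Prop :=
  match f with
  | FEq t1 t2 => teval M v t1 = teval M v t2
  | FDelta t => cdelta M (teval M v t)
  | FNot g => ~ qeval M v g
  | FAnd g h => qeval M v g /\ qeval M v h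
  | FOr g h => qeval M v g \/ qeval M v h
  end.

(* The existential sentence "exists x_0 x_1 ..., f" (all variables of the
   quantifier-free f existentially quantified) holds in M. *)
Definition ex_holds (C : Grp) (M : CGrp C) (f : qf C) : Prop :=
  exists v : nat -> M, qeval M v f.

Fixpoint group_term (C : Type) (t : term C) : Prop :=
  match t with
  | TVar _ _ => True
  | TConst _ => False
  | TOne _ => True
  | TMul t1 t2 => group_term t1 /\ group_term t2
  | TInv t1 => group_term t1
  end.

Fixpoint group_qf (C : Type) (f : qf C) : Prop :=
  match f with
  | FEq t1 t2 => group_term t1 /\ group_term t2
  | FDelta _ => False
  | FNot g => group_qf g
  | FAnd g h => group_qf g /\ group_qf h
  | FOr g h => group_qf g /\ group_qf h
  end.

Definition ex_equiv_LC (C : Grp) (M N : CGrp C) : Prop :=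
  forall f : qf C, ex_holds M f <-> ex_holds N f.

Definition ex_equiv_groups (C : Grp) (M N : CGrp C) : Prop :=
  forall f : qf C, group_qf f -> (ex_holds M f <-> ex_holds N f).

(* Let P = A *_C B with A ∩ B = C.  Every element of P is a product of
   letters from A ⊔ B (generation, via the universal property).  Whether a
   product of letters equals 1, or lies in δ, is decided by a stack
   reduction: letters are pushed one by one, neighbouring letters of the same
   factor are multiplied, and letters lying in C are absorbed into their
   neighbours.  A reduced stack has length ≤ 1 or is an alternating sequence
   of letters outside C; by the normal form theorem (proved with van der
   Waerden's permutation trick) the latter never evaluates to 1 nor to an
   element of δ, while stacks of length ≤ 1 are decided inside A or B.

   The reduction only consults finitely many letters, products and
   C-membership facts (its trace).  Given an existential sentence true in P1,
   we gather the letters of all traces, transport them to A2, B2 through the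
   finite L_C-isomorphisms provided by F-equivalence, and observe that the
   reduction in P2 runs in lockstep; hence the transported witnesses satisfy
   the same atomic formulas.  The argument is symmetric, and sentences of the
   pure group language are a special case. *)

From Stdlib Require Import List Classical ClassicalEpsilon FunctionalExtensionality
  ProofIrrelevance PropExtensionality Lia Bool.
Import ListNotations.

Section GroupFacts.
Context (G : Grp).
Local Notation "x * y" := (gmul G x y).
Local Notation "1" := (gone G).
Local Notation "x ^-1" := (ginv G x) (at level 9).

Lemma g_cancel_l x y z : x * y = x * z -> y = z.
Proof.
  intro H. rewrite <- (gmul_1l G y), <- (gmul_1l G z), <- (gmul_Vl G x).
  rewrite <- !gmul_assoc, H. reflexivity.
Qed.

Lemma g_mulV x : x * x^-1 = 1.
Proof.
  apply (g_cancel_l (x^-1)). rewrite gmul_assoc, gmul_Vl, gmul_1l.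
  apply (g_cancel_l (x^-1 ^-1)). rewrite gmul_assoc, gmul_Vl, gmul_1l.
  reflexivity.
Qed.

Lemma g_mul1 x : x * 1 = x.
Proof. rewrite <- (gmul_Vl G x), gmul_assoc, g_mulV, gmul_1l. reflexivity. Qed.

Lemma g_cancel_r x y z : y * x = z * x -> y = z.
Proof.
  intro H. rewrite <- (g_mul1 y), <- (g_mul1 z), <- (g_mulV x), !gmul_assoc, H.
  reflexivity.
Qed.

Lemma g_inv_uniq x y : x * y = 1 -> y = x^-1.
Proof. intro H. apply (g_cancel_l x). rewrite H, g_mulV. reflexivity. Qed.

Lemma g_invK x : (x^-1)^-1 = x.
Proof. symmetry. apply g_inv_uniq, gmul_Vl. Qed.

Lemma g_invM x y : (x * y)^-1 = y^-1 * x^-1.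
Proof.
  symmetry. apply g_inv_uniq.
  rewrite gmul_assoc, <- (gmul_assoc G x y), g_mulV, g_mul1, g_mulV. reflexivity.
Qed.

Lemma g_inv1 : 1^-1 = 1.
Proof. symmetry. apply g_inv_uniq, gmul_1l. Qed.

Lemma g_idem x : x * x = x -> x = 1.
Proof. intro H. apply (g_cancel_l x). rewrite g_mul1. exact H. Qed.

(* Equations are normalised to the form [u = 1]. *)
Lemma g_eq_div x y : x = y <-> x * y^-1 = 1.
Proof.
  split; intro H; [subst; apply g_mulV|].
  apply (g_cancel_r (y^-1)). rewrite H, g_mulV. reflexivity.
Qed.
End GroupFacts.

Lemma hom_one (G H : Grp) (f : G -> H) : is_hom G H f -> f (gone G) = gone H.
Proof. intro hf. apply g_idem. rewrite <- hf, gmul_1l. reflexivity. Qed.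

Lemma hom_inv (G H : Grp) (f : G -> H) :
  is_hom G H f -> forall x, f (ginv G x) = ginv H (f x).
Proof. intros hf x. apply g_inv_uniq. rewrite <- hf, g_mulV. apply hom_one, hf. Qed.

Lemma dc_one {C : Grp} (X : CGrp C) : dc X (gone C) = gone X.
Proof. apply hom_one, dc_hom. Qed.

Lemma dc_mul {C : Grp} (X : CGrp C) c d : dc X (gmul C c d) = gmul X (dc X c) (dc X d).
Proof. apply dc_hom. Qed.

Lemma dc_inv {C : Grp} (X : CGrp C) c : dc X (ginv C c) = ginv X (dc X c).
Proof. apply hom_inv, dc_hom. Qed.

(* A transversal of the right cosets C·x in a C-group X, chosen with Hilbert's
   ε: every x is written uniquely as d_(cof x) · rep x, where rep x = 1 for
   x ∈ C and rep x ∉ C otherwise. *)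
Section Transversal.
Context {C : Grp} (X : CGrp C).

Definition memC (x : X) : option C :=
  match excluded_middle_informative (exists c, dc X c = x) with
  | left H => Some (proj1_sig (constructive_indefinite_description _ H))
  | right _ => None
  end.

Lemma memC_spec x c : memC x = Some c <-> dc X c = x.
Proof.
  unfold memC. destruct excluded_middle_informative as [H|H].
  - destruct constructive_indefinite_description as [d Hd]; simpl.
    split; intro E.
    + inversion E; subst; auto.
    + f_equal. apply (dc_inj X). congruence.
  - split; intro E; [discriminate | exfalso; eauto].
Qed.

Lemma memC_None x : memC x = None <-> forall c, dc X c <> x.
Proof.
  split.
  - intros E c Hc. apply memC_spec in Hc. congruence.
  - intro H. destruct (memC x) eqn:E; auto.
    apply memC_spec in E. exfalso; eapply H; eauto.
Qed.

Lemma memC_dc c : memC (dc X c) = Some c.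
Proof. apply memC_spec; auto. Qed.

Lemma memC_shift x c : memC (gmul X (dc X c) x) = None <-> memC x = None.
Proof.
  rewrite !memC_None. split; intros H d Hd.
  - apply (H (gmul C c d)). rewrite dc_mul, Hd; auto.
  - apply (H (gmul C (ginv C c) d)).
    rewrite dc_mul, Hd, dc_inv, gmul_assoc, gmul_Vl, gmul_1l; auto.
Qed.

Definition coset (x : X) : X -> Prop := fun y => exists c, y = gmul X (dc X c) x.

Lemma coset_shift x c : coset (gmul X (dc X c) x) = coset x.
Proof.
  apply functional_extensionality; intro y. apply propositional_extensionality.
  unfold coset; split; intros [d Hd].
  - exists (gmul C d c). rewrite Hd, dc_mul, gmul_assoc; auto.
  - exists (gmul C d (ginv C c)). rewrite Hd, dc_mul, dc_inv, <- !gmul_assoc.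
    rewrite (gmul_assoc X (ginv X _)), gmul_Vl, gmul_1l. auto.
Qed.

Definition rep (x : X) : X :=
  match memC x with
  | Some _ => gone X
  | None => epsilon (inhabits (gone X)) (coset x)
  end.

Lemma rep_shift x c : rep (gmul X (dc X c) x) = rep x.
Proof.
  unfold rep. destruct (memC x) eqn:E.
  - destruct (memC (gmul X (dc X c) x)) eqn:E2; auto.
    apply memC_shift in E2. congruence.
  - rewrite (proj2 (memC_shift x c) E), coset_shift. auto.
Qed.

Lemma rep_spec x : exists c, x = gmul X (dc X c) (rep x).
Proof.
  unfold rep. destruct (memC x) as [c|] eqn:E.
  - exists c. apply memC_spec in E. rewrite g_mul1; auto.
  - assert (Hx : coset x (epsilon (inhabits (gone X)) (coset x))).
    { apply epsilon_spec. exists x, (gone C). rewrite dc_one, gmul_1l; auto. }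
    destruct Hx as [d Hd].
    exists (ginv C d). rewrite Hd, gmul_assoc, dc_inv, gmul_Vl, gmul_1l; auto.
Qed.

Lemma rep_C x c : memC x = Some c -> rep x = gone X.
Proof. unfold rep. intro E; rewrite E; auto. Qed.

Lemma rep_notC x : memC x = None -> memC (rep x) = None.
Proof.
  intro E. destruct (rep_spec x) as [c Hc].
  rewrite Hc in E. apply memC_shift in E. auto.
Qed.

Lemma rep_rep x : rep (rep x) = rep x.
Proof.
  destruct (rep_spec x) as [c Hc].
  rewrite <- (rep_shift (rep x) c), <- Hc. auto.
Qed.

Definition cof (x : X) : C :=
  match memC (gmul X x (ginv X (rep x))) with Some c => c | None => gone C end.

Lemma cof_spec x : x = gmul X (dc X (cof x)) (rep x).
Proof.
  destruct (rep_spec x) as [c Hc].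
  assert (E : memC (gmul X x (ginv X (rep x))) = Some c).
  { apply memC_spec. set (r := rep x) in *. clearbody r.
    rewrite Hc at 1. rewrite <- gmul_assoc, g_mulV, g_mul1; auto. }
  unfold cof. rewrite E. auto.
Qed.

Lemma cof_unique x c y : x = gmul X (dc X c) y -> rep y = y -> cof x = c.
Proof.
  intros Hx Hy. assert (Hr : rep x = y) by (rewrite Hx, rep_shift; auto).
  pose proof (cof_spec x) as H1. rewrite Hr in H1. rewrite Hx in H1 at 1.
  apply g_cancel_r in H1. apply (dc_inj X); auto.
Qed.

Lemma cof_dc c : cof (dc X c) = c.
Proof.
  apply (cof_unique _ c (gone X)); [rewrite g_mul1; auto|].
  eapply rep_C. rewrite <- dc_one. apply memC_dc.
Qed.
End Transversal.

Section Symmetric.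
Context (T : Type).

Definition perm := {p : (T -> T) * (T -> T) | forall x, fst p (snd p x) = x /\ snd p (fst p x) = x}.

Lemma perm_ext (p q : perm) :
  (forall x, fst (proj1_sig p) x = fst (proj1_sig q) x) ->
  (forall x, snd (proj1_sig p) x = snd (proj1_sig q) x) -> p = q.
Proof.
  destruct p as [[f g] Hp], q as [[f' g'] Hq]; simpl; intros H1 H2.
  apply functional_extensionality in H1. apply functional_extensionality in H2. subst.
  f_equal. apply proof_irrelevance.
Qed.

Definition perm_mul (p q : perm) : perm.
Proof.
  refine (exist _ (fun x => fst (proj1_sig p) (fst (proj1_sig q) x),
                   fun x => snd (proj1_sig q) (snd (proj1_sig p) x)) _).
  destruct p as [[f g] Hp], q as [[f' g'] Hq]; simpl. intro x.
  split; [rewrite (proj1 (Hq _)); apply Hp | rewrite (proj2 (Hp _)); apply Hq].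
Defined.

Definition perm_inv (p : perm) : perm.
Proof.
  refine (exist _ (snd (proj1_sig p), fst (proj1_sig p)) _).
  destruct p as [[f g] Hp]; simpl. intro x. split; apply Hp.
Defined.

Definition perm_one : perm.
Proof. refine (exist _ (fun x => x, fun x => x) _). intro x; split; reflexivity. Defined.

Definition Sym : Grp.
Proof.
  refine (@Build_Grp perm perm_mul perm_inv perm_one _ _ _).
  - intros; apply perm_ext; reflexivity.
  - intros; apply perm_ext; reflexivity.
  - intros [[f g] Hp]; apply perm_ext; simpl; intro x; apply Hp.
Defined.
End Symmetric.

(* Normal forms are pairs (c, w) of an element of C
   and a word w of letters, each letter being a transversal element outside C
   of one of the factors.  A factor X acts on normal forms: g absorbs the
   leading X-letter x of w (if any) and rewrites g · d_c · x as a C-coordinate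
   followed by a transversal letter.  The factor is abstract here: letters
   form a type [Lt] into which X embeds via [inj], with partial inverse
   [proj], and [nf] is the normal-form predicate on words. *)
Section FactorAction.
Context {C : Grp} (X : CGrp C) (Lt : Type) (inj : X -> Lt) (proj : Lt -> option X)
  (nf : list Lt -> Prop).

Definition head_foreign (r : list Lt) : Prop :=
  match r with y :: _ => proj y = None | [] => True end.

Hypothesis proj_inj : forall x, proj (inj x) = Some x.
Hypothesis inj_proj : forall x y, proj y = Some x -> y = inj x.
Hypothesis nf_inj : forall x r, nf (inj x :: r) <->
  (memC X x = None /\ rep X x = x /\ nf r /\ head_foreign r).

Definition split_head (w : C * list Lt) : X * list Lt :=
  match snd w with
  | y :: r => match proj y with
              | Some x => (gmul X (dc X (fst w)) x, r)
              | None => (dc X (fst w), snd w) end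
  | [] => (dc X (fst w), [])
  end.

Definition attach (z : X) (r : list Lt) : C * list Lt :=
  match memC X z with
  | Some _ => (cof X z, r)
  | None => (cof X z, inj (rep X z) :: r)
  end.

Definition act (g : X) (w : C * list Lt) : C * list Lt :=
  attach (gmul X g (fst (split_head w))) (snd (split_head w)).

Lemma split_head_nf w :
  nf (snd w) -> nf (snd (split_head w)) /\ head_foreign (snd (split_head w)).
Proof.
  destruct w as [c0 [|y r]]; unfold split_head; simpl; [auto|].
  destruct (proj y) eqn:E; simpl; intro V; [|auto].
  apply inj_proj in E; subst. apply nf_inj in V. tauto.
Qed.

Lemma attach_nf z r : nf r -> head_foreign r -> nf (snd (attach z r)).
Proof.
  intros V H. unfold attach. destruct (memC X z) eqn:E; simpl; auto.
  apply nf_inj. split; [apply rep_notC; auto|]. split; [apply rep_rep|]. auto.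
Qed.

Lemma act_nf g w : nf (snd w) -> nf (snd (act g w)).
Proof. intro V. destruct (split_head_nf w V). apply attach_nf; auto. Qed.

Lemma split_head_attach z r : head_foreign r -> split_head (attach z r) = (z, r).
Proof.
  intro H. unfold attach. destruct (memC X z) as [c|] eqn:E; unfold split_head; simpl.
  - pose proof (cof_spec X z) as Hz. rewrite (rep_C X z c E), g_mul1 in Hz.
    destruct r as [|y r']; simpl in *; [|rewrite H]; rewrite <- Hz; auto.
  - rewrite proj_inj, <- cof_spec. auto.
Qed.

Lemma act_mul g h w : nf (snd w) -> act g (act h w) = act (gmul X g h) w.
Proof.
  intro V. destruct (split_head_nf w V) as [V1 H1].
  unfold act at 2. unfold act at 1. rewrite split_head_attach; auto. simpl.
  rewrite gmul_assoc. auto.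
Qed.

Lemma act_dc_inj c c0 x r :
  nf (inj x :: r) -> act (dc X c) (c0, inj x :: r) = (gmul C c c0, inj x :: r).
Proof.
  intro V. apply nf_inj in V as (V1 & V2 & V3 & V4).
  unfold act, split_head; simpl. rewrite proj_inj; simpl.
  rewrite gmul_assoc, <- dc_mul. unfold attach.
  destruct (memC X (gmul X (dc X (gmul C c c0)) x)) eqn:E2.
  - exfalso. rewrite <- (memC_shift X x (gmul C c c0)) in V1. congruence.
  - rewrite rep_shift, V2. f_equal. apply cof_unique with (y := x); auto.
Qed.

Lemma split_head_foreign c0 r : head_foreign r -> split_head (c0, r) = (dc X c0, r).
Proof. destruct r as [|y r]; unfold split_head; simpl; intro H; [|rewrite H]; auto. Qed.

Lemma act_dc_foreign c c0 r :
  head_foreign r -> act (dc X c) (c0, r) = (gmul C c c0, r).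
Proof.
  intro H. unfold act. rewrite split_head_foreign by exact H. simpl.
  rewrite <- dc_mul. unfold attach. rewrite memC_dc, cof_dc. auto.
Qed.

Lemma act_one w : nf (snd w) -> act (gone X) w = w.
Proof.
  destruct w as [c0 r]; simpl; intro V.
  rewrite <- (dc_one X). rewrite <- (gmul_1l C c0) at 2.
  destruct r as [|y r]; [apply act_dc_foreign; exact I|].
  destruct (proj y) as [x|] eqn:E.
  - apply inj_proj in E; subst. apply act_dc_inj; auto.
  - apply act_dc_foreign. exact E.
Qed.

Lemma act_grow g c0 r : head_foreign r -> memC X g = None ->
  exists c y, act g (c0, r) = (c, inj y :: r).
Proof.
  intros H Hg. unfold act. rewrite split_head_foreign by exact H. simpl. unfold attach.
  destruct (memC X (gmul X g (dc X c0))) as [d|] eqn:E2; [|eauto].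
  exfalso. apply memC_spec in E2. apply (proj1 (memC_None X g) Hg (gmul C d (ginv C c0))).
  rewrite dc_mul, E2, <- gmul_assoc, <- dc_mul, g_mulV, dc_one, g_mul1. auto.
Qed.

Definition NF := {w : C * list Lt | nf (snd w)}.

Lemma NF_eq (u v : NF) : proj1_sig u = proj1_sig v -> u = v.
Proof. destruct u, v; simpl; intro; subst; f_equal; apply proof_irrelevance. Qed.

Definition act_NF (g : X) (w : NF) : NF :=
  exist _ (act g (proj1_sig w)) (act_nf g _ (proj2_sig w)).

Definition act_perm (g : X) : Sym NF.
Proof.
  refine (exist _ (act_NF g, act_NF (ginv X g)) _).
  intro w; simpl; split; apply NF_eq; simpl; rewrite act_mul by apply proj2_sig;
    [rewrite g_mulV | rewrite gmul_Vl]; apply act_one, proj2_sig.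
Defined.

Lemma act_perm_hom : is_hom X (Sym NF) act_perm.
Proof.
  intros g h. apply perm_ext; simpl; intro w; apply NF_eq; simpl.
  - symmetry; apply act_mul, proj2_sig.
  - rewrite act_mul by apply proj2_sig. rewrite g_invM. auto.
Qed.
End FactorAction.

Definition letter {C : Grp} (A B : CGrp C) : Type := (A + B)%type.

Section Letters.
Context {C : Grp} {A B : CGrp C}.

Definition side (y : letter A B) : bool := match y with inl _ => true | inr _ => false end.

(* Letter operations: product within a factor (only meaningful for letters of
   the same side), inverse, the constant d_c on a given side, δ, and the
   C-coordinate of a letter lying in C. *)
Definition lmul (x y : letter A B) : letter A B :=
  match x, y with
  | inl a, inl a' => inl (gmul A a a')
  | inr b, inr b' => inr (gmul B b b')
  | _, _ => x
  end.
Definition linv (x : letter A B) : letter A B :=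
  match x with inl a => inl (ginv A a) | inr b => inr (ginv B b) end.
Definition lc (s : bool) (c : C) : letter A B := if s then inl (dc A c) else inr (dc B c).
Definition ldelta (x : letter A B) : Prop :=
  match x with inl a => cdelta A a | inr b => cdelta B b end.
Definition inC (y : letter A B) : option C :=
  match y with inl a => memC A a | inr b => memC B b end.
Definition nonC (y : letter A B) : Prop := inC y = None.

Fixpoint alt (l : list (letter A B)) : Prop :=
  match l with
  | [] => True
  | x :: l' => match l' with y :: _ => side x <> side y | [] => True end /\ alt l'
  end.

Lemma side_lmul x y : side (lmul x y) = side x.
Proof. destruct x, y; reflexivity. Qed.
Lemma side_lc s c : side (lc s c) = s.
Proof. destruct s; reflexivity. Qed.
Lemma side_linv x : side (linv x) = side x.
Proof. destruct x; reflexivity. Qed.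

Lemma inC_spec x c : inC x = Some c <-> x = lc (side x) c.
Proof.
  destruct x as [a|b]; simpl; rewrite memC_spec; split; intro H; subst; auto; congruence.
Qed.

Lemma inC_lc s c : inC (lc s c) = Some c.
Proof. apply inC_spec. rewrite side_lc; auto. Qed.

Lemma nonC_lmul_lc u c : nonC u -> nonC (lmul u (lc (side u) c)).
Proof.
  unfold nonC. intro H. destruct (inC (lmul u (lc (side u) c))) as [d|] eqn:E; auto.
  apply inC_spec in E. rewrite side_lmul in E. exfalso.
  destruct u as [a|b]; simpl in *; inversion E as [E'].
  - apply (proj1 (memC_None A a) H (gmul C d (ginv C c))).
    rewrite dc_mul, dc_inv, <- E', <- gmul_assoc, g_mulV, g_mul1; auto.
  - apply (proj1 (memC_None B b) H (gmul C d (ginv C c))).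
    rewrite dc_mul, dc_inv, <- E', <- gmul_assoc, g_mulV, g_mul1; auto.
Qed.

Lemma nonC_linv x : nonC x -> nonC (linv x).
Proof.
  unfold nonC. intro H. destruct (inC (linv x)) as [d|] eqn:E; auto.
  apply inC_spec in E. rewrite side_linv in E. exfalso.
  destruct x as [a|b]; simpl in *; inversion E as [E'].
  - apply (proj1 (memC_None A a) H (ginv C d)). rewrite dc_inv, <- E', g_invK; auto.
  - apply (proj1 (memC_None B b) H (ginv C d)). rewrite dc_inv, <- E', g_invK; auto.
Qed.

Lemma alt_map_linv st : alt st -> alt (map linv st).
Proof.
  induction st as [|y st IH]; simpl; auto. intros [H1 H2]. split; auto.
  destruct st; simpl; auto. rewrite !side_linv; auto.
Qed.

Definition prjA (y : letter A B) : option A := match y with inl a => Some a | inr _ => None end.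
Definition prjB (y : letter A B) : option B := match y with inr b => Some b | inl _ => None end.
Definition transversal_letter (y : letter A B) : Prop :=
  match y with
  | inl a => memC A a = None /\ rep A a = a
  | inr b => memC B b = None /\ rep B b = b
  end.
Fixpoint nf_word (l : list (letter A B)) : Prop :=
  match l with
  | [] => True
  | y :: l' => transversal_letter y /\ nf_word l' /\
               match l' with z :: _ => side y <> side z | [] => True end
  end.

Lemma nf_word_A a r : nf_word (inl a :: r) <->
  (memC A a = None /\ rep A a = a /\ nf_word r /\ head_foreign A (letter A B) prjA r).
Proof. simpl. destruct r as [|[z|z] r]; simpl; intuition congruence. Qed.

Lemma nf_word_B b r : nf_word (inr b :: r) <->
  (memC B b = None /\ rep B b = b /\ nf_word r /\ head_foreign B (letter A B) prjB r).
Proof. simpl. destruct r as [|[z|z] r]; simpl; intuition congruence. Qed.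

Lemma prjA_inl x y : prjA y = Some x -> y = inl x.
Proof. destruct y; simpl; congruence. Qed.
Lemma prjB_inr x y : prjB y = Some x -> y = inr x.
Proof. destruct y; simpl; congruence. Qed.

Definition normal_forms : Type := @NF C (letter A B) nf_word.
Definition actA := act A (letter A B) inl prjA.
Definition actB := act B (letter A B) inr prjB.
Definition permA : A -> Sym normal_forms :=
  act_perm A (letter A B) inl prjA nf_word (fun _ => eq_refl) prjA_inl nf_word_A.
Definition permB : B -> Sym normal_forms :=
  act_perm B (letter A B) inr prjB nf_word (fun _ => eq_refl) prjB_inr nf_word_B.

Lemma actA_dc c w : nf_word (snd w) -> actA (dc A c) w = (gmul C c (fst w), snd w).
Proof.
  destruct w as [c0 [|[a|b] l']]; simpl; intro V; unfold actA.
  - apply act_dc_foreign; exact I.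
  - apply (act_dc_inj A (letter A B) inl prjA nf_word (fun _ => eq_refl) nf_word_A); auto.
  - apply act_dc_foreign; reflexivity.
Qed.

Lemma actB_dc c w : nf_word (snd w) -> actB (dc B c) w = (gmul C c (fst w), snd w).
Proof.
  destruct w as [c0 [|[a|b] l']]; simpl; intro V; unfold actB.
  - apply act_dc_foreign; exact I.
  - apply act_dc_foreign; reflexivity.
  - apply (act_dc_inj B (letter A B) inr prjB nf_word (fun _ => eq_refl) nf_word_B); auto.
Qed.

Lemma permA_permB c : permA (dc A c) = permB (dc B c).
Proof.
  apply perm_ext; intro w; apply NF_eq; simpl; [|rewrite <- !dc_inv];
    fold actA actB; rewrite actA_dc, actB_dc by apply proj2_sig; reflexivity.
Qed.
End Letters.

(* A stack lists the letters of a word from right to left.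
   Pushing x onto a stack with top y: letters of the same factor are
   multiplied, and a letter lying in C is absorbed into its neighbour (the
   product yx, if in C, into the letter u below y; a new letter x in C into y;
   a bottom letter y in C into x). *)
Section Reduction.
Context {C : Grp} {A B : CGrp C}.

Definition push (st : list (letter A B)) (x : letter A B) : list (letter A B) :=
  match st with
  | [] => [x]
  | y :: rest =>
    if Bool.eqb (side y) (side x) then
      match rest with
      | [] => [lmul y x]
      | u :: rest' => match inC (lmul y x) with
                      | Some c => lmul u (lc (side u) c) :: rest'
                      | None => lmul y x :: rest
                      end
      end
    else
      match rest, inC y with
      | [], Some c => [lmul (lc (side x) c) x]
      | _, _ => match inC x with
                | Some c => lmul y (lc (side y) c) :: rest
                | None => x :: y :: rest
                end
      end
  end.

Fixpoint reduce (w : list (letter A B)) (st : list (letter A B)) : list (letter A B) :=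
  match w with [] => st | x :: w' => reduce w' (push st x) end.

Definition reduced (st : list (letter A B)) : Prop :=
  length st <= 1 \/ (alt st /\ Forall nonC st).

Lemma reduced_alt st : reduced st -> alt st.
Proof. intros [H|[H _]]; auto. destruct st as [|? [|? ?]]; simpl in *; auto; lia. Qed.

Lemma push_reduced st x : reduced st -> reduced (push st x).
Proof.
  intro R. destruct st as [|y rest]; simpl; [left; simpl; lia|].
  assert (R2 : forall u r, rest = u :: r ->
            side y <> side u /\ alt (u :: r) /\ nonC y /\ Forall nonC (u :: r)).
  { intros u r E; subst. destruct R as [R|[[R1a R1b] R2]]; [simpl in R; lia|].
    inversion R2; subst. tauto. }
  destruct (Bool.eqb (side y) (side x)) eqn:Es.
  - apply eqb_prop in Es. destruct rest as [|u rest']; [left; simpl; lia|].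
    destruct (R2 u rest' eq_refl) as (S1 & S2 & S3 & S4). inversion S4; subst.
    destruct (inC (lmul y x)) as [c|] eqn:Ec.
    + destruct rest' as [|v rest'']; [left; simpl; lia|]. right. destruct S2 as [S2a S2b].
      split; [split; [rewrite side_lmul; auto | auto]|].
      constructor; auto. apply nonC_lmul_lc; auto.
    + right. simpl. split; [split; [rewrite side_lmul; congruence | exact S2]|].
      constructor; auto.
  - assert (Hd : side y <> side x) by (intro E; rewrite E, eqb_reflx in Es; discriminate).
    destruct rest as [|u rest'].
    + destruct (inC y) as [c|] eqn:Ey; [left; simpl; lia|].
      destruct (inC x) as [c|] eqn:Ex; [left; simpl; lia|].
      right. split; [repeat split; congruence|]. constructor; auto.
    + destruct (R2 u rest' eq_refl) as (S1 & S2 & S3 & S4).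
      destruct (inC x) as [c|] eqn:Ex.
      * right. split; [split; [rewrite side_lmul; auto | auto]|].
        inversion S4; subst. constructor; auto. apply nonC_lmul_lc; auto.
      * right. split; [split; [congruence | split; assumption]|]. constructor; auto.
Qed.

Lemma push_nonC st x : alt st -> Forall nonC st -> 2 <= length st ->
  Forall nonC (push st x) /\ push st x <> [].
Proof.
  intros Ha Hn Hl. destruct st as [|y [|u rest]]; simpl in Hl; try lia.
  inversion Hn as [|? ? Hy Hn']; subst. inversion Hn'; subst. simpl.
  destruct (Bool.eqb (side y) (side x)); [destruct (inC (lmul y x)) eqn:Ec
                                          | destruct (inC x) eqn:Ex];
    (split; [|discriminate]); repeat constructor; auto; apply nonC_lmul_lc; auto.
Qed.

Lemma reduce_reduced w st : reduced st -> reduced (reduce w st).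
Proof. revert st; induction w; simpl; intros; auto. apply IHw, push_reduced; auto. Qed.
End Reduction.

Section Amalgam.
Context {C : Grp} {A B P : CGrp C} (i : A -> P) (j : B -> P).

Definition val (y : letter A B) : P := match y with inl a => i a | inr b => j b end.
Definition lprod (l : list (letter A B)) : P :=
  fold_right (fun y acc => gmul P (val y) acc) (gone P) l.

Lemma lprod_app l1 l2 : lprod (l1 ++ l2) = gmul P (lprod l1) (lprod l2).
Proof.
  induction l1 as [|y l1 IH]; simpl; [rewrite gmul_1l; auto|].
  rewrite IH, gmul_assoc; auto.
Qed.

Hypothesis hP : is_amalgam A B P i j.

Lemma i_hom : is_hom A P i. Proof. apply hP. Qed.
Lemma j_hom : is_hom B P j. Proof. apply hP. Qed.
Lemma i_dc c : i (dc A c) = dc P c. Proof. apply hP. Qed.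
Lemma j_dc c : j (dc B c) = dc P c. Proof. apply hP. Qed.

Lemma val_lmul x y : side x = side y -> val (lmul x y) = gmul P (val x) (val y).
Proof. destruct x, y; simpl; intro H; try discriminate; [apply i_hom | apply j_hom]. Qed.

Lemma val_lc s c : val (lc s c) = dc P c.
Proof. destruct s; simpl; [apply i_dc | apply j_dc]. Qed.

Lemma val_linv x : val (linv x) = ginv P (val x).
Proof. destruct x; simpl; apply hom_inv; [apply i_hom | apply j_hom]. Qed.

Lemma val_inC x c : inC x = Some c -> val x = dc P c.
Proof. intro H. apply inC_spec in H. rewrite H, val_lc. auto. Qed.

(* The normal form theorem, via a homomorphism h : P → Sym(NF) extending the
   actions of A and B: h(x_1⋯x_n) sends the empty normal form to a normal form
   whose word has n letters. *)
Section NormalForm.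
Variable h : P -> Sym (@normal_forms C A B).
Hypothesis h_hom : is_hom P _ h.
Hypothesis h_i : forall a, h (i a) = permA a.
Hypothesis h_j : forall b, h (j b) = permB b.

Definition nf_empty : @normal_forms C A B :=
  exist (fun w : C * list (letter A B) => nf_word (snd w)) (gone C, []) I.

Definition orbit_word (p : P) : list (letter A B) :=
  snd (proj1_sig (fst (proj1_sig (h p)) nf_empty)).

Definition head_side (l : list (letter A B)) : option bool :=
  match l with y :: _ => Some (side y) | [] => None end.

Lemma orbit_word_shape l : alt l -> Forall nonC l ->
  length (orbit_word (lprod l)) = length l /\ head_side (orbit_word (lprod l)) = head_side l.
Proof.
  induction l as [|x l IH]; intros Ha Hn.
  - unfold orbit_word. simpl. rewrite (hom_one _ _ _ h_hom). auto.
  - destruct Ha as [Ha1 Ha2]. inversion Hn as [|? ? Hx Hl]; subst.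
    destruct (IH Ha2 Hl) as [IH1 IH2]. unfold orbit_word in *. simpl lprod.
    rewrite h_hom. simpl.
    destruct (fst (proj1_sig (h (lprod l))) nf_empty) as [[c m] Vm]. simpl in *.
    assert (Hside : forall y m', m = y :: m' -> side y <> side x).
    { intros y m' ->. destruct l as [|z l]; [discriminate|].
      simpl in IH2, Ha1. inversion IH2. congruence. }
    destruct x as [a|b]; simpl; [rewrite h_i | rewrite h_j]; simpl.
    + unfold actA. destruct (act_grow A (letter A B) inl prjA a c m) as (c' & y & ->); simpl; auto.
      destruct m as [|[a'|b'] m]; simpl; auto. exfalso; eapply Hside; eauto.
    + unfold actB. destruct (act_grow B (letter A B) inr prjB b c m) as (c' & y & ->); simpl; auto.
      destruct m as [|[a'|b'] m]; simpl; auto. exfalso; eapply Hside; eauto.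
Qed.
End NormalForm.

Theorem normal_form l : alt l -> Forall nonC l -> l <> [] -> lprod l <> gone P.
Proof.
  destruct hP as (Hi & Hj & Hic & Hjc & _ & Huniv).
  destruct (Huniv _ permA permB) as (h & Hh & Hhi & Hhj & _);
    [apply act_perm_hom | apply act_perm_hom | apply permA_permB|].
  intros Ha Hn Hne E. destruct (orbit_word_shape h Hh Hhi Hhj l Ha Hn) as [Hlen _].
  unfold orbit_word in Hlen. rewrite E, (hom_one _ _ _ Hh) in Hlen.
  destruct l; simpl in Hlen; congruence.
Qed.

Definition stval (st : list (letter A B)) : P := lprod (rev st).

Lemma stval_cons y st : stval (y :: st) = gmul P (stval st) (val y).
Proof. unfold stval. simpl. rewrite lprod_app. simpl. rewrite g_mul1; auto. Qed.

Lemma push_val st x : stval (push st x) = gmul P (stval st) (val x).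
Proof.
  assert (Hnew : forall y rest, side y <> side x -> stval
            (match inC x with
             | Some c => lmul y (lc (side y) c) :: rest
             | None => x :: y :: rest end) = gmul P (stval (y :: rest)) (val x)).
  { intros y rest Hs. destruct (inC x) as [c|] eqn:Ex; [|rewrite (stval_cons x); auto].
    apply val_inC in Ex. rewrite !stval_cons, val_lmul by (rewrite side_lc; auto).
    rewrite val_lc, Ex, gmul_assoc. auto. }
  destruct st as [|y rest]; simpl; [rewrite stval_cons; auto|].
  destruct (Bool.eqb (side y) (side x)) eqn:Es.
  - apply eqb_prop in Es. destruct rest as [|u rest'].
    + rewrite !stval_cons, val_lmul by auto. rewrite gmul_assoc. auto.
    + destruct (inC (lmul y x)) as [c|] eqn:Ec.
      * apply val_inC in Ec. rewrite val_lmul in Ec by auto.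
        rewrite !stval_cons, val_lmul by (rewrite side_lc; auto).
        rewrite val_lc, <- Ec, !gmul_assoc. auto.
      * rewrite !stval_cons, val_lmul by auto. rewrite gmul_assoc. auto.
  - assert (Hd : side y <> side x) by (intro E; rewrite E, eqb_reflx in Es; discriminate).
    destruct rest as [|u rest']; [|apply Hnew; auto].
    destruct (inC y) as [c|] eqn:Ey; [|apply Hnew; auto].
    apply val_inC in Ey. rewrite !stval_cons, val_lmul by (rewrite side_lc; auto).
    rewrite val_lc, Ey, gmul_assoc. auto.
Qed.

Lemma reduce_val w st : stval (reduce w st) = gmul P (stval st) (lprod w).
Proof.
  revert st; induction w as [|x w IH]; intro st; simpl; [rewrite g_mul1; auto|].
  rewrite IH, push_val, <- gmul_assoc. auto.
Qed.

Lemma stval_inv st : ginv P (stval st) = lprod (map linv st).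
Proof.
  induction st as [|y st IH]; [apply g_inv1|].
  rewrite stval_cons, g_invM, IH, <- val_linv. auto.
Qed.

Lemma normal_form_stack st : alt st -> Forall nonC st -> st <> [] -> stval st <> gone P.
Proof.
  intros Ha Hn Hne E. apply (normal_form (map linv st)).
  - apply alt_map_linv; auto.
  - apply Forall_map. eapply Forall_impl; [|exact Hn]. apply nonC_linv.
  - destruct st; simpl; congruence.
  - rewrite <- stval_inv, E. apply g_inv1.
Qed.

Lemma injective_of_trivial_kernel (X : CGrp C) (f : X -> P) (hf : is_hom X P f)
  (hfc : forall c, f (dc X c) = dc P c)
  (hN : forall d, memC X d = None -> f d <> gone P) a a' : f a = f a' -> a = a'.
Proof.
  intro E. apply g_eq_div.
  set (d := gmul X a (ginv X a')).
  assert (Hd : f d = gone P) by (unfold d; rewrite hf, (hom_inv _ _ _ hf), E; apply g_mulV).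
  destruct (memC X d) as [c|] eqn:Ec.
  - apply memC_spec in Ec. rewrite <- Ec, hfc, <- (dc_one P) in Hd.
    apply (dc_inj P) in Hd. rewrite Hd, dc_one in Ec. auto.
  - exfalso. apply (hN d Ec Hd).
Qed.

Lemma val_inj x y : side x = side y -> val x = val y -> x = y.
Proof.
  assert (Hnf : forall x, nonC x -> val x <> gone P).
  { intros z Hz E. apply (normal_form [z]); simpl; auto; [congruence|]. rewrite g_mul1; auto. }
  destruct x as [a|b], y as [a'|b']; simpl; intros Hs E; try discriminate; f_equal.
  - apply (injective_of_trivial_kernel A i i_hom i_dc); auto.
    intros d Hd. apply (Hnf (inl d)); auto.
  - apply (injective_of_trivial_kernel B j j_hom j_dc); auto.
    intros d Hd. apply (Hnf (inr d)); auto.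
Qed.

Lemma val_one_iff x : val x = gone P <-> lmul x x = x.
Proof.
  split; intro H.
  - assert (Hx : x = lc (side x) (gone C)).
    { apply val_inj; [rewrite side_lc; auto|]. rewrite val_lc, dc_one; auto. }
    rewrite Hx. destruct (side x); simpl; rewrite <- dc_mul, gmul_1l; auto.
  - apply g_idem. rewrite <- val_lmul by auto. rewrite H. auto.
Qed.

Lemma reduced_eq_one st : reduced st ->
  (stval st = gone P <-> st = [] \/ exists x, st = [x] /\ lmul x x = x).
Proof.
  intro R. destruct st as [|x [|y st']].
  - split; auto.
  - unfold stval; simpl. rewrite g_mul1, val_one_iff. split.
    + intro; right; eauto.
    + intros [H|[z [H1 H2]]]; [discriminate|]. inversion H1; subst; auto.
  - destruct R as [R|[R1 R2]]; [simpl in R; lia|]. split.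
    + intro E. exfalso. apply (normal_form_stack _ R1 R2); auto. discriminate.
    + intros [H|[z [H1 H2]]]; discriminate.
Qed.

Lemma delta_val p : cdelta P p <-> exists y, ldelta y /\ p = val y.
Proof.
  destruct hP as (_ & _ & _ & _ & Hd & _). rewrite Hd. split.
  - intros [[a [H1 H2]]|[b [H1 H2]]]; [exists (inl a) | exists (inr b)]; auto.
  - intros [[a|b] [H1 H2]]; [left; exists a | right; exists b]; auto.
Qed.

Hypothesis hI : forall (a : A) (b : B), i a = j b -> exists c, a = dc A c /\ b = dc B c.

(* Since A ∩ B = C, letters of different sides with equal values lie in C. *)
Lemma val_cross x y : side x <> side y -> val x = val y -> exists c, x = lc (side x) c.
Proof.
  destruct x as [a|b], y as [a'|b']; simpl; intros Hs E; try congruence.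
  - destruct (hI a b' E) as [c [H1 _]]. exists c. subst; auto.
  - destruct (hI a' b (eq_sym E)) as [c [_ H1]]. exists c. subst; auto.
Qed.

Lemma reduced_delta st : reduced st ->
  (cdelta P (stval st) <-> st = [] \/ exists x, st = [x] /\ ldelta x).
Proof.
  intro R. destruct st as [|x [|y st']].
  - split; auto. intros _. apply delta_val. exists (inl (dc A (gone C))). split.
    + apply cdelta_dc.
    + simpl. rewrite i_dc, dc_one. auto.
  - unfold stval; simpl. rewrite g_mul1, delta_val. split.
    + intros [z [Hz E]]. right. exists x. split; auto.
      destruct (Bool.bool_dec (side x) (side z)) as [Hs|Hs].
      * rewrite (val_inj x z Hs E); auto.
      * destruct (val_cross x z Hs E) as [c Hc]. rewrite Hc. destruct (side x); apply cdelta_dc.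
    + intros [H|[z [H1 H2]]]; [discriminate|]. inversion H1; subst. eauto.
  - destruct R as [R|[R1 R2]]; [simpl in R; lia|]. split.
    + intro E. exfalso. apply delta_val in E. destruct E as [z [_ E]].
      set (st := x :: y :: st') in *.
      destruct (push_nonC st (linv z) R1 R2) as [N1 N2]; [simpl; lia|].
      apply (normal_form_stack (push st (linv z))); auto.
      * apply reduced_alt, push_reduced. right; auto.
      * rewrite push_val, E, val_linv. apply g_mulV.
    + intros [H|[z [H1 H2]]]; discriminate.
Qed.
End Amalgam.

(* Terms as words.  A symbol is a letter, possibly formally inverted, or a
   constant of C; keeping inversion formal lets a letter map transport words
   without knowing inverses in advance. *)
Section Words.
Context {C : Grp} {A B : CGrp C}.

Definition sym : Type := (bool * letter A B + C)%type.

Definition norm (s : sym) : letter A B :=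
  match s with
  | inl (false, x) => x
  | inl (true, x) => linv x
  | inr c => lc true c
  end.
Definition flip (s : sym) : sym :=
  match s with inl (b, x) => inl (negb b, x) | inr c => inr (ginv C c) end.
Definition winv (W : list sym) : list sym := rev (map flip W).

Fixpoint tw (w : nat -> list sym) (t : term C) : list sym :=
  match t with
  | TVar _ n => w n
  | TConst c => [inr c]
  | TOne _ => []
  | TMul t1 t2 => tw w t1 ++ tw w t2
  | TInv t1 => winv (tw w t1)
  end.
End Words.
Arguments sym {C} A B.

Section WordValues.
Context {C : Grp} {A B P : CGrp C} (i : A -> P) (j : B -> P) (hP : is_amalgam A B P i j).

Definition sprod (W : list (sym A B)) : P := lprod i j (map norm W).

Lemma sprod_app W1 W2 : sprod (W1 ++ W2) = gmul P (sprod W1) (sprod W2).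
Proof. unfold sprod. rewrite map_app. apply lprod_app. Qed.

Lemma val_flip s : val i j (norm (flip s)) = ginv P (val i j (norm s)).
Proof.
  destruct s as [[[|] x]|c]; simpl.
  - rewrite (val_linv i j hP), g_invK. auto.
  - apply (val_linv i j hP).
  - change (val i j (lc true (ginv C c)) = ginv P (val i j (lc true c))).
    rewrite !(val_lc i j hP). apply dc_inv.
Qed.

Lemma sprod_winv W : sprod (winv W) = ginv P (sprod W).
Proof.
  induction W as [|s W IH]; unfold winv in *; simpl; [symmetry; apply g_inv1|].
  rewrite sprod_app, IH. unfold sprod at 2 3. simpl.
  rewrite val_flip, g_mul1, g_invM. auto.
Qed.

Lemma tw_eval w t : sprod (tw w t) = teval P (fun n => sprod (w n)) t.
Proof.
  induction t; simpl; auto.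
  - unfold sprod; simpl. rewrite g_mul1. apply (i_dc i j hP).
  - rewrite sprod_app, IHt1, IHt2. auto.
  - rewrite sprod_winv, IHt. auto.
Qed.

Lemma lprod_rev_linv l : lprod i j (rev (map linv l)) = ginv P (lprod i j l).
Proof.
  induction l as [|x l IH]; simpl; [symmetry; apply g_inv1|].
  rewrite lprod_app, IH. simpl. rewrite g_mul1, (val_linv i j hP), g_invM. auto.
Qed.

Definition products := {p : P | exists l, lprod i j l = p}.

Lemma products_eq (u v : products) : proj1_sig u = proj1_sig v -> u = v.
Proof. destruct u, v; simpl; intro; subst; f_equal; apply proof_irrelevance. Qed.

Definition products_mul (u v : products) : products.
Proof.
  refine (exist _ (gmul P (proj1_sig u) (proj1_sig v)) _).
  destruct u as [p [l1 H1]], v as [q [l2 H2]]; simpl. exists (l1 ++ l2).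
  rewrite lprod_app; congruence.
Defined.

Definition products_inv (u : products) : products.
Proof.
  refine (exist _ (ginv P (proj1_sig u)) _).
  destruct u as [p [l1 H1]]; simpl. exists (rev (map linv l1)).
  rewrite lprod_rev_linv; congruence.
Defined.

Definition products_one : products.
Proof. refine (exist _ (gone P) _). exists []. auto. Defined.

Definition Products : Grp.
Proof.
  refine (@Build_Grp products products_mul products_inv products_one _ _ _);
    intros; apply products_eq; simpl.
  - apply gmul_assoc.
  - apply gmul_1l.
  - apply gmul_Vl.
Defined.

(* P is generated by A and B: the universal property, applied to P and to the
   subgroup of products, shows that the inclusion of that subgroup is onto. *)
Lemma generation (p : P) : exists l, lprod i j l = p.
Proof.
  destruct hP as (Hi & Hj & Hic & Hjc & _ & Huniv).
  pose (fA := fun a : A => (exist _ (i a) (ex_intro _ [inl a] (g_mul1 P (i a))) : Products)).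
  pose (fB := fun b : B => (exist _ (j b) (ex_intro _ [inr b] (g_mul1 P (j b))) : Products)).
  destruct (Huniv Products fA fB) as (h & Hh & Hhi & Hhj & _).
  { intros x y; apply products_eq; simpl; apply Hi. }
  { intros x y; apply products_eq; simpl; apply Hj. }
  { intros c; apply products_eq; simpl. rewrite Hic, Hjc; auto. }
  destruct (Huniv P i j Hi Hj) as (h0 & _ & _ & _ & Huniq).
  { intros c; rewrite Hic, Hjc; auto. }
  assert (Eid := Huniq (fun x => x) (fun x y => eq_refl) (fun a => eq_refl) (fun b => eq_refl) p).
  assert (Eh := Huniq (fun x => proj1_sig (h x))).
  rewrite <- Eh in Eid.
  - simpl in Eid. rewrite Eid. apply proj2_sig.
  - intros x y. rewrite Hh. auto.
  - intro a. rewrite Hhi. auto.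
  - intro b. rewrite Hhj. auto.
Qed.

Lemma assignment_words (v : nat -> P) :
  exists w : nat -> list (sym A B), forall n, sprod (w n) = v n.
Proof.
  exists (fun n => map (fun x => inl (false, x))
            (proj1_sig (constructive_indefinite_description _ (generation (v n))))).
  intro n. destruct constructive_indefinite_description as [l Hl]; simpl.
  unfold sprod. rewrite map_map, map_id. exact Hl.
Qed.
End WordValues.

(* The trace of a reduction: every letter whose identity, product or
   C-membership is consulted by [push]. *)
Section Trace.
Context {C : Grp} {A B : CGrp C}.

Definition push_trace (st : list (letter A B)) (x : letter A B) : list (letter A B) :=
  match st with
  | [] => [x]
  | y :: rest =>
    [x; y; lmul y x] ++
    (match rest with
     | u :: _ => u :: match inC (lmul y x) with
                      | Some c => [lc (side u) c; lmul u (lc (side u) c)]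
                      | None => [] end
     | [] => [] end) ++
    (match inC y with Some c => [lc (side x) c; lmul (lc (side x) c) x] | None => [] end) ++
    (match inC x with Some c => [lc (side y) c; lmul y (lc (side y) c)] | None => [] end)
  end.

Fixpoint reduce_trace (w st : list (letter A B)) : list (letter A B) :=
  match w with [] => [] | x :: w' => push_trace st x ++ reduce_trace w' (push st x) end.
End Trace.

Section Simulation.
Context {C : Grp} {A1 B1 A2 B2 : CGrp C}.
Variable phi : letter A1 B1 -> letter A2 B2.
Variable S : letter A1 B1 -> Prop.
Hypothesis side_phi : forall x, side (phi x) = side x.
Hypothesis inC_phi : forall x, S x -> inC (phi x) = inC x.
Hypothesis lmul_phi : forall x y, S x -> S y -> S (lmul x y) -> side x = side y ->
  phi (lmul x y) = lmul (phi x) (phi y).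

Lemma lc_phi s c : S (lc s c) -> phi (lc s c) = lc s c.
Proof.
  intro H. pose proof (inC_phi _ H) as E. rewrite inC_lc in E.
  apply inC_spec in E. rewrite E, side_phi, side_lc. auto.
Qed.

Lemma absorb_right_phi u c : S u -> S (lc (side u) c) -> S (lmul u (lc (side u) c)) ->
  phi (lmul u (lc (side u) c)) = lmul (phi u) (lc (side u) c).
Proof. intros. rewrite lmul_phi, lc_phi; rewrite ?side_lc; auto. Qed.

Lemma absorb_left_phi c x : S x -> S (lc (side x) c) -> S (lmul (lc (side x) c) x) ->
  phi (lmul (lc (side x) c) x) = lmul (lc (side x) c) (phi x).
Proof. intros. rewrite lmul_phi, lc_phi; rewrite ?side_lc; auto. Qed.

Local Ltac in_push_trace HS := apply HS; unfold push_trace;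
  repeat match goal with E : inC _ = _ |- _ => rewrite E end;
  simpl; rewrite ?in_app_iff; simpl; tauto.

Lemma push_sim st x : (forall y, In y (push_trace st x) -> S y) ->
  push (map phi st) (phi x) = map phi (push st x).
Proof.
  intro HS. destruct st as [|y rest]; [simpl; auto|].
  assert (Sx : S x) by (apply HS; simpl; auto).
  assert (Sy : S y) by (apply HS; simpl; auto).
  assert (Sz : S (lmul y x)) by (apply HS; simpl; auto).
  simpl. rewrite !side_phi.
  destruct (Bool.eqb (side y) (side x)) eqn:Es.
  - apply eqb_prop in Es. rewrite <- lmul_phi by auto.
    destruct rest as [|u rest']; simpl; auto.
    rewrite inC_phi by auto.
    destruct (inC (lmul y x)) as [c|] eqn:Ec; simpl; auto.
    rewrite side_phi, absorb_right_phi by in_push_trace HS. auto.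
  - rewrite (inC_phi y), (inC_phi x) by auto.
    assert (Hx : match inC x with
      | Some c => lmul (phi y) (lc (side y) c) :: map phi rest
      | None => phi x :: phi y :: map phi rest end =
      map phi (match inC x with
      | Some c => lmul y (lc (side y) c) :: rest
      | None => x :: y :: rest end)).
    { destruct (inC x) as [c|] eqn:Ex; simpl; auto.
      rewrite absorb_right_phi by in_push_trace HS. auto. }
    destruct rest as [|u rest']; simpl; auto.
    destruct (inC y) as [c|] eqn:Ey; simpl; auto.
    rewrite absorb_left_phi by in_push_trace HS. auto.
Qed.

Lemma reduce_sim w st : (forall y, In y (reduce_trace w st) -> S y) ->
  reduce (map phi w) (map phi st) = map phi (reduce w st).
Proof.
  revert st; induction w as [|x w IH]; intros st HS; simpl; auto.
  simpl in HS. rewrite push_sim.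
  - apply IH. intros y Hy. apply HS, in_or_app; auto.
  - intros y Hy. apply HS, in_or_app; auto.
Qed.
End Simulation.

Record letter_iso {C : Grp} {A1 B1 A2 B2 : CGrp C}
    (phi : letter A1 B1 -> letter A2 B2) (S : letter A1 B1 -> Prop) : Prop := {
  li_side : forall x, side (phi x) = side x;
  li_inC : forall x, S x -> inC (phi x) = inC x;
  li_lmul : forall x y, S x -> S y -> S (lmul x y) -> side x = side y ->
    phi (lmul x y) = lmul (phi x) (phi y);
  li_linv : forall x, S x -> S (linv x) -> phi (linv x) = linv (phi x);
  li_idem : forall x, S x -> (lmul x x = x <-> lmul (phi x) (phi x) = phi x);
  li_delta : forall x, S x -> (ldelta x <-> ldelta (phi x))
}.
Arguments li_side {C A1 B1 A2 B2 phi S}.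
Arguments li_inC {C A1 B1 A2 B2 phi S}.
Arguments li_lmul {C A1 B1 A2 B2 phi S}.
Arguments li_linv {C A1 B1 A2 B2 phi S}.
Arguments li_idem {C A1 B1 A2 B2 phi S}.
Arguments li_delta {C A1 B1 A2 B2 phi S}.

Section Transport.
Context {C : Grp} {A1 B1 P1 A2 B2 P2 : CGrp C}
  (i1 : A1 -> P1) (j1 : B1 -> P1) (i2 : A2 -> P2) (j2 : B2 -> P2)
  (hP1 : is_amalgam A1 B1 P1 i1 j1) (hP2 : is_amalgam A2 B2 P2 i2 j2)
  (hI1 : forall (a : A1) (b : B1), i1 a = j1 b -> exists c, a = dc A1 c /\ b = dc B1 c)
  (hI2 : forall (a : A2) (b : B2), i2 a = j2 b -> exists c, a = dc A2 c /\ b = dc B2 c).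
Variable phi : letter A1 B1 -> letter A2 B2.
Variable S : letter A1 B1 -> Prop.
Hypothesis hphi : letter_iso phi S.

Definition sym_map (s : sym A1 B1) : sym A2 B2 :=
  match s with inl (b, x) => inl (b, phi x) | inr c => inr c end.

Definition sym_letters (W : list (sym A1 B1)) : list (letter A1 B1) :=
  flat_map (fun s => match s with
                     | inl (_, x) => [x; linv x]
                     | inr c => [lc true c] end) W.

Definition word_trace (W : list (sym A1 B1)) : list (letter A1 B1) :=
  reduce_trace (map norm W) [] ++ reduce (map norm W) [] ++ sym_letters W.

Lemma norm_sym_map W : (forall y, In y (sym_letters W) -> S y) ->
  map norm (map sym_map W) = map phi (map norm W).
Proof.
  induction W as [|s W IH]; intro H; simpl; auto.
  simpl in H. f_equal.
  - destruct s as [[[|] x]|c]; simpl.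
    + symmetry; apply (li_linv hphi); apply H; simpl; auto.
    + auto.
    + change (lc true c = phi (lc true c)). symmetry.
      apply (lc_phi phi S (li_side hphi) (li_inC hphi)). apply H; simpl; auto.
  - apply IH. intros y Hy. apply H, in_or_app. auto.
Qed.

Lemma winv_sym_map W : map sym_map (winv W) = winv (map sym_map W).
Proof.
  unfold winv. rewrite map_rev, !map_map. f_equal. apply map_ext.
  intros [[b x]|c]; reflexivity.
Qed.

Lemma tw_sym_map w t : tw (fun n => map sym_map (w n)) t = map sym_map (tw w t).
Proof.
  induction t; simpl; auto.
  - rewrite map_app, IHt1, IHt2; auto.
  - rewrite IHt, winv_sym_map; auto.
Qed.

Lemma stack_answer_transfer (Q1 : letter A1 B1 -> Prop) (Q2 : letter A2 B2 -> Prop) st :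
  (forall x, S x -> (Q1 x <-> Q2 (phi x))) -> (forall y, In y st -> S y) ->
  ((st = [] \/ exists x, st = [x] /\ Q1 x) <->
   (map phi st = [] \/ exists x, map phi st = [x] /\ Q2 x)).
Proof.
  intros HQ HS. destruct st as [|x [|y st]]; simpl; [tauto| |].
  - assert (Sx : S x) by (apply HS; simpl; auto).
    split; intros [H|[z [H1 H2]]]; try discriminate; right; injection H1 as <-.
    + exists (phi x). split; auto. apply HQ; auto.
    + exists x. split; auto. apply HQ; auto.
  - split; intros [H|[z [H1 H2]]]; discriminate.
Qed.

Lemma word_transfer W : (forall y, In y (word_trace W) -> S y) ->
  (sprod i1 j1 W = gone P1 <-> sprod i2 j2 (map sym_map W) = gone P2) /\
  (cdelta P1 (sprod i1 j1 W) <-> cdelta P2 (sprod i2 j2 (map sym_map W))).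
Proof.
  intro HW. unfold word_trace in HW.
  assert (Htr : forall y, In y (reduce_trace (map norm W) []) -> S y)
    by (intros; apply HW, in_or_app; auto).
  assert (Hlet : forall y, In y (sym_letters W) -> S y)
    by (intros; apply HW, in_or_app; right; apply in_or_app; auto).
  set (st := reduce (map norm W) []).
  assert (Hst : forall y, In y st -> S y)
    by (intros; apply HW, in_or_app; right; apply in_or_app; auto).
  assert (E1 : sprod i1 j1 W = stval i1 j1 st).
  { unfold st. rewrite (reduce_val i1 j1 hP1). unfold stval at 1; simpl. rewrite gmul_1l. auto. }
  assert (E2 : sprod i2 j2 (map sym_map W) = stval i2 j2 (map phi st)).
  { unfold st. rewrite <- (reduce_sim phi S (li_side hphi) (li_inC hphi) (li_lmul hphi))
      by exact Htr.
    rewrite (reduce_val i2 j2 hP2). unfold stval at 1; simpl. rewrite gmul_1l.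
    unfold sprod. rewrite norm_sym_map; auto. }
  assert (R1 : reduced st) by (apply reduce_reduced; left; simpl; lia).
  assert (R2 : reduced (map phi st)).
  { unfold st. rewrite <- (reduce_sim phi S (li_side hphi) (li_inC hphi) (li_lmul hphi))
      by exact Htr.
    apply reduce_reduced; left; simpl; lia. }
  rewrite E1, E2. split.
  - rewrite (reduced_eq_one i1 j1 hP1 _ R1), (reduced_eq_one i2 j2 hP2 _ R2).
    apply stack_answer_transfer; auto. apply (li_idem hphi).
  - rewrite (reduced_delta i1 j1 hP1 hI1 _ R1), (reduced_delta i2 j2 hP2 hI2 _ R2).
    apply stack_answer_transfer; auto. apply (li_delta hphi).
Qed.

Fixpoint atoms (w : nat -> list (sym A1 B1)) (f : qf C) : list (list (sym A1 B1)) :=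
  match f with
  | FEq t1 t2 => [tw w t1 ++ winv (tw w t2)]
  | FDelta t => [tw w t]
  | FNot g => atoms w g
  | FAnd g h => atoms w g ++ atoms w h
  | FOr g h => atoms w g ++ atoms w h
  end.

Lemma formula_transfer w f :
  (forall W, In W (atoms w f) -> forall y, In y (word_trace W) -> S y) ->
  (qeval P1 (fun n => sprod i1 j1 (w n)) f <->
   qeval P2 (fun n => sprod i2 j2 (map sym_map (w n))) f).
Proof.
  assert (Hev2 : forall t, teval P2 (fun n => sprod i2 j2 (map sym_map (w n))) t =
                           sprod i2 j2 (map sym_map (tw w t))).
  { intro t. rewrite <- tw_sym_map, (tw_eval i2 j2 hP2). auto. }
  induction f; simpl; intro H; rewrite <- ?(tw_eval i1 j1 hP1), ?Hev2.
  - rewrite (g_eq_div P1), (g_eq_div P2).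
    rewrite <- (sprod_winv i1 j1 hP1), <- sprod_app.
    rewrite <- (sprod_winv i2 j2 hP2), <- sprod_app, <- winv_sym_map, <- map_app.
    apply (proj1 (word_transfer _ (H _ (or_introl eq_refl)))).
  - apply (proj2 (word_transfer _ (H _ (or_introl eq_refl)))).
  - rewrite IHf; auto. tauto.
  - rewrite (IHf1 (fun W HW => H W (in_or_app _ _ _ (or_introl HW)))),
      (IHf2 (fun W HW => H W (in_or_app _ _ _ (or_intror HW)))). tauto.
  - rewrite (IHf1 (fun W HW => H W (in_or_app _ _ _ (or_introl HW)))),
      (IHf2 (fun W HW => H W (in_or_app _ _ _ (or_intror HW)))). tauto.
Qed.
End Transport.

(* Removing duplicates, as [fin_embeds] only applies to duplicate-free lists. *)
Lemma dedup_exists (T : Type) (l : list T) : exists l', NoDup l' /\ forall x, In x l <-> In x l'.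
Proof.
  induction l as [|a l [l' [H1 H2]]]; [exists []; split; [constructor | tauto]|].
  destruct (classic (In a l')) as [Ha|Ha].
  - exists l'. split; auto. intro x. simpl. rewrite H2. split; [intros [<-|E]|]; auto.
  - exists (a :: l'). split; [constructor; auto|]. intro x. simpl. rewrite H2. tauto.
Qed.

Fixpoint index_of {T : Type} (a : T) (l : list T) : nat :=
  match l with
  | [] => 0
  | x :: l' => if excluded_middle_informative (x = a) then 0 else S (index_of a l')
  end.

Lemma index_of_spec {T : Type} (a : T) l d :
  In a l -> index_of a l < length l /\ nth (index_of a l) l d = a.
Proof.
  induction l as [|x l IH]; simpl; [tauto|]. intro H.
  destruct (excluded_middle_informative (x = a)) as [E|E]; simpl; [split; [lia | auto]|].
  destruct H as [H|H]; [congruence|]. destruct (IH H). split; [lia | auto].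
Qed.

Definition iso_on {C : Grp} {X Y : CGrp C} (f : X -> Y) (D : X -> Prop) : Prop :=
  forall a a' a'', D a -> D a' -> D a'' ->
  (forall c : C, dc X c = a <-> dc Y c = f a) /\
  (cdelta X a <-> cdelta Y (f a)) /\
  (gmul X a a' = a'' <-> gmul Y (f a) (f a') = f a'') /\
  (ginv X a = a' <-> ginv Y (f a) = f a').

Lemma fin_embeds_iso_on {C : Grp} (X Y : CGrp C) :
  fin_embeds X Y -> forall l : list X, exists f : X -> Y, iso_on f (fun x => In x l).
Proof.
  intros hXY l. destruct (dedup_exists _ l) as [s [Hs Hls]].
  destruct (hXY s Hs) as [t (_ & _ & _ & Hiso)].
  exists (fun a => nth (index_of a s) t (gone Y)).
  intros a a' a'' Ha Ha' Ha''. rewrite Hls in Ha, Ha', Ha''.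
  destruct (index_of_spec a s a Ha) as [I1 N1].
  destruct (index_of_spec a' s a Ha') as [I2 N2].
  destruct (index_of_spec a'' s a Ha'') as [I3 N3].
  pose proof (Hiso _ _ _ a (gone Y) I1 I2 I3) as K. simpl in K.
  rewrite N1, N2, N3 in K. exact K.
Qed.

Lemma memC_iff {C : Grp} (X Y : CGrp C) (x : X) (y : Y) :
  (forall c, dc X c = x <-> dc Y c = y) -> memC X x = memC Y y.
Proof.
  intro H. destruct (memC X x) as [c|] eqn:E.
  - apply memC_spec in E. symmetry. apply memC_spec, H; auto.
  - destruct (memC Y y) as [c|] eqn:E2; auto.
    apply memC_spec, H, memC_spec in E2. congruence.
Qed.

Lemma letter_iso_exists {C : Grp} (A1 B1 A2 B2 : CGrp C) :
  fin_embeds A1 A2 -> fin_embeds B1 B2 -> forall Sl : list (letter A1 B1),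
  exists (phi : letter A1 B1 -> letter A2 B2) (S : letter A1 B1 -> Prop),
    letter_iso phi S /\ forall y, In y Sl -> S y.
Proof.
  intros hA hB Sl.
  set (lA := flat_map (fun x : letter A1 B1 => match x with inl a => [a] | inr _ => [] end) Sl).
  set (lB := flat_map (fun x : letter A1 B1 => match x with inr b => [b] | inl _ => [] end) Sl).
  destruct (fin_embeds_iso_on A1 A2 hA lA) as [fA HfA].
  destruct (fin_embeds_iso_on B1 B2 hB lB) as [fB HfB].
  exists (fun x => match x with inl a => inl (fA a) | inr b => inr (fB b) end).
  exists (fun x => match x with inl a => In a lA | inr b => In b lB end).
  split.
  - constructor.
    + intros [a|b]; reflexivity.
    + intros [a|b] Hx; simpl; symmetry; apply memC_iff;
        [apply (HfA a a a) | apply (HfB b b b)]; auto.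
    + intros [a|b] [a'|b'] Hx Hy Hz Hs; simpl in *; try discriminate; f_equal; symmetry;
        [apply (HfA a a' _) | apply (HfB b b' _)]; auto.
    + intros [a|b] Hx Hy; simpl in *; f_equal; symmetry;
        [apply (HfA a _ a) | apply (HfB b _ b)]; auto.
    + intros [a|b] Hx; simpl in *;
        [pose proof (proj1 (proj2 (proj2 (HfA a a a Hx Hx Hx)))) as K
        |pose proof (proj1 (proj2 (proj2 (HfB b b b Hx Hx Hx)))) as K];
        split; intro E; injection E; intro E'; f_equal; apply K; auto.
    + intros [a|b] Hx; simpl in *; [apply (HfA a a a) | apply (HfB b b b)]; auto.
  - intros [a|b] Hy; apply in_flat_map; eexists; split; eauto; simpl; auto.
Qed.

Lemma existential_transfer {C : Grp} {A1 B1 P1 A2 B2 P2 : CGrp C}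
  (i1 : A1 -> P1) (j1 : B1 -> P1) (i2 : A2 -> P2) (j2 : B2 -> P2)
  (hP1 : is_amalgam A1 B1 P1 i1 j1) (hP2 : is_amalgam A2 B2 P2 i2 j2)
  (hI1 : forall (a : A1) (b : B1), i1 a = j1 b -> exists c, a = dc A1 c /\ b = dc B1 c)
  (hI2 : forall (a : A2) (b : B2), i2 a = j2 b -> exists c, a = dc A2 c /\ b = dc B2 c)
  (hA : fin_embeds A1 A2) (hB : fin_embeds B1 B2) (f : qf C) :
  ex_holds P1 f -> ex_holds P2 f.
Proof.
  intros [v1 Hv1].
  destruct (assignment_words i1 j1 hP1 v1) as [w1 Hw1].
  destruct (letter_iso_exists A1 B1 A2 B2 hA hB (flat_map word_trace (atoms w1 f)))
    as (phi & S & Hphi & HS).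
  exists (fun n => sprod i2 j2 (map (sym_map phi) (w1 n))).
  apply (formula_transfer i1 j1 i2 j2 hP1 hP2 hI1 hI2 phi S Hphi w1 f).
  - intros W HW y Hy. apply HS, in_flat_map. eauto.
  - replace (fun n => sprod i1 j1 (w1 n)) with v1; auto.
    apply functional_extensionality; intro n; auto.
Qed.

(* The argument does not need C to be nontrivial. *)
Theorem mainTheorem7 (C : Grp) (hC : nontrivial C)
  (A1 B1 A2 B2 P1 P2 : CGrp C)
  (i1 : A1 -> P1) (j1 : B1 -> P1) (i2 : A2 -> P2) (j2 : B2 -> P2)
  (hP1 : is_amalgam A1 B1 P1 i1 j1) (hP2 : is_amalgam A2 B2 P2 i2 j2)
  (hI1 : forall (a : A1) (b : B1), i1 a = j1 b -> exists c, a = dc A1 c /\ b = dc B1 c)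
  (hI2 : forall (a : A2) (b : B2), i2 a = j2 b -> exists c, a = dc A2 c /\ b = dc B2 c)
  (hA : F_equiv A1 A2) (hB : F_equiv B1 B2) :
  ex_equiv_LC P1 P2 /\ ex_equiv_groups P1 P2.
Proof.
  assert (Hequiv : ex_equiv_LC P1 P2).
  { intro f. split.
    - exact (existential_transfer i1 j1 i2 j2 hP1 hP2 hI1 hI2 (proj1 hA) (proj1 hB) f).
    - exact (existential_transfer i2 j2 i1 j1 hP2 hP1 hI2 hI1 (proj2 hA) (proj2 hB) f). }
  split; [exact Hequiv | intros f _; apply Hequiv].
Qed.
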